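(* Assume the standing setup below and additionally $n\ge 2s-2r+1$. Then for every integer $i$ with $0\le i\le s-2r+1$, \[ \binom{n-1}{i}+\binom{n-1}{i+1}+\cdots+\binom{n-1}{i+2r-1}+\dim\left(\frac{\langle L_H: H\in \bigcup_{j=i}^{s}\mathbb{P}_j(X)\rangle}{\langle L_H: H\in \bigcup_{j=i}^{i+2r-1}\mathbb{P}_j(X)\rangle}\right) \le \binom{n-1}{s-2r+1}+\binom{n-1}{s-2r+2}+\cdots+\binom{n-1}{s}, \] where $\langle S\rangle$ is the $\mathbb{F}_p$-span of $S$ and the fraction denotes the quotient vector space.
   Context: Standing setup: $p$ is a prime; $K=\{k_1,\ldots,k_r\}$ and $L=\{l_1,\ldots,l_s\}$ are disjoint subsets of $\{0,1,\ldots,p-1\}$; $\mathcal{A}=\{A_1,\ldots,A_m\}$ is a family of distinct subsets of $[n]$ with $|A_i|\pmod p\in K$ for all $i$ and $|A_i\cap A_j|\pmod p\in L$ for all $i\ne j$. Let $X=[n-1]$. Associate a variable $x_i$ to each $A_i$, and for each $I\subseteq X$ define the linear form over $\mathbb{F}_p$: $L_I=\sum_{i:\ I\subseteq A_i} x_i$. For $j\ge0$, $\mathbb{P}_j(X)$ is the set of $j$-element subsets of $X$. *)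

From HB Require Import structures.
From mathcomp Require Import all_boot all_order all_algebra.
Set Implicit Arguments. Unset Strict Implicit. Unset Printing Implicit Defensive.
Import GRing.Theory.
Local Open Scope ring_scope.

(* Ground set [n] is modelled by 'I_n (elements 0..n-1);
   X = [n-1] is the set of the first n-1 elements. *)
Definition Xset (n : nat) : {set 'I_n} := [set x : 'I_n | (val x < n.-1)%N].

(* The linear form L_I = sum_{i : I subset A_i} x_i over F_p, as a row vector
   of coefficients in the m variables x_1..x_m (x_i <-> delta_mx 0 i). *)
Definition Lform (p n m : nat) (A : 'I_m -> {set 'I_n}) (I : {set 'I_n})
  : 'rV['F_p]_m :=
  \sum_(i < m | I \subset A i) delta_mx 0 i.

(* Union of P_j(X) for lo <= j < hi (half-open, so empty ranges are handled exactly). *)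
Definition layers (n lo hi : nat) : {set {set 'I_n}} :=
  [set I : {set 'I_n} | (I \subset Xset n) && (lo <= #|I| < hi)%N].

Definition Lspan (p n m : nat) (A : 'I_m -> {set 'I_n}) (lo hi : nat)
  : {vspace 'rV['F_p]_m} :=
  <<[seq Lform p A H | H <- enum (layers n lo hi)]>>%VS.

(* dim (U / V) for a subspace V of U. *)
Definition quot_dim (F : fieldType) (vT : vectType F) (U V : {vspace vT}) : nat :=
  (\dim U - \dim V)%N.

From HB Require Import structures.
From mathcomp Require Import all_boot all_order all_algebra.
From mathcomp Require Import zify.
Set Implicit Arguments. Unset Strict Implicit. Unset Printing Implicit Defensive.
Import GRing.Theory.
Local Open Scope ring_scope.

(* Let k = t + 2r < p.  For a t-subset T of X, the sum [Lsup T k] of the forms L_J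
   over the k-subsets J of X containing T has x_a-coefficient binom(|A_a :&: X| - t, 2r).
   This is a polynomial of degree 2r in |A_a :&: X| - t, whose argument only takes the
   values k_j - t and k_j - 1 - t modulo p; reducing modulo the polynomial vanishing
   there turns it into a combination of binom(_, q) with q < 2r, so [Lsup T k] already
   lies in the span of the layers t, ..., k - 1.  By Wilson's theorem the inclusion
   matrix of t-subsets versus k-subsets of the (n-1)-set X has rank binom(n-1, t) over
   F_p, so adding the layer k raises the dimension by at most
   binom(n-1, k) - binom(n-1, t).  Summing over k = i + 2r, ..., s telescopes to the
   claimed inequality. *)

Section SubsetSums.
Variable T : finType.
Implicit Types (A B K S U : {set T}) (j : T).

Definition subset_sum (R : nmodType) (t : nat) (y : {set T} -> R) K : R :=
  \sum_(A : {set T} | (A \subset K) && (#|A| == t)) y A.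

Lemma subset_sum_id (R : nmodType) t (y : {set T} -> R) K :
  #|K| = t -> subset_sum t y K = y K.
Proof.
move=> cardK; rewrite /subset_sum (big_pred1 K) // => A /=.
rewrite eqEcard -cardK; apply/andP/andP => [[sAK /eqP->]|[sAK le_KA]] //.
by rewrite eqn_leq le_KA subset_leq_card.
Qed.

Lemma subset_sum0 (R : nmodType) (y : {set T} -> R) K :
  subset_sum 0 y K = y set0.
Proof.
rewrite /subset_sum (big_pred1 set0) // => A /=.
by rewrite cards_eq0 andbC; case: eqP => // ->; rewrite sub0set.
Qed.

Lemma subset_sum_mem (R : nmodType) t (y : {set T} -> R) K j : j \in K ->
  \sum_(A : {set T} | (A \subset K) && (#|A| == t.+1) && (j \in A)) y A =
  subset_sum t (fun B => y (j |: B)) (K :\ j).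
Proof.
move=> jK; rewrite /subset_sum (reindex_onto (fun B => j |: B) (fun A => A :\ j)); last first.
  by move=> A /andP[_ jA]; rewrite setD1K.
apply: eq_bigl => B; case jB: (j \in B).
  have -> : ((j |: B) :\ j == B) = false.
    by apply/negbTE/negP => /eqP E; move: jB; rewrite -E !inE eqxx.
  by rewrite andbF subsetD1 jB !andbF.
rewrite setU1K ?jB // eqxx andbT setU11 andbT cardsU1 jB add1n eqSS subsetD1 jB andbT.
by rewrite subUset sub1set jK.
Qed.

Lemma subset_sumS (R : nmodType) t (y : {set T} -> R) K j : j \in K ->
  subset_sum t.+1 y K =
  subset_sum t.+1 y (K :\ j) + subset_sum t (fun B => y (j |: B)) (K :\ j).
Proof.
move=> jK; rewrite /subset_sum (bigID (fun A => j \in A)) /= addrC subset_sum_mem //.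
congr (_ + _); apply: eq_bigl => A.
by rewrite subsetD1 -andbA [(_ == _) && _]andbC andbA.
Qed.

Definition drop_sum (R : nmodType) (z : {set T} -> R) A : R := \sum_(j in A) z (A :\ j).

Lemma subset_sum_drop_sum (R : pzSemiRingType) q (z : {set T} -> R) S :
  subset_sum q.+1 (drop_sum z) S = (#|S| - q)%:R * subset_sum q z S.
Proof.
rewrite /subset_sum /drop_sum.
transitivity (\sum_(A : {set T} | (A \subset S) && (#|A| == q.+1))
                \sum_(j in S | j \in A) z (A :\ j)).
  apply: eq_bigr => A /andP[sAS _]; apply: eq_bigl => j.
  by case jA: (j \in A); rewrite ?andbF // (subsetP sAS).
rewrite (exchange_big_dep (mem S)) /=; last by move=> A j _ /andP[].
transitivity (\sum_(j in S)
    \sum_(B : {set T} | (B \subset S) && (#|B| == q) && (j \notin B)) z B).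
  apply: eq_bigr => j jS; rewrite (eq_bigl (fun A : {set T} =>
     (A \subset S) && (#|A| == q.+1) && (j \in A))) => [|A]; last by rewrite jS.
  rewrite subset_sum_mem //; apply: eq_big => [B|B /andP[]].
    by rewrite subsetD1 -!andbA [(j \notin B) && _]andbC.
  by rewrite subsetD1 => /andP[_ jB] _; rewrite setU1K.
rewrite (exchange_big_dep (fun B : {set T} => (B \subset S) && (#|B| == q))) /=;
  last by move=> j B _ /andP[].
rewrite mulr_sumr; apply: eq_bigr => B /andP[sBS /eqP cardB].
rewrite (eq_bigl (mem (S :\: B))) => [|j]; last by rewrite !inE sBS cardB eqxx andbC.
by rewrite sumr_const mulr_natl cardsDS // cardB.
Qed.

Lemma cardsD1S A j t : j \in A -> #|A| = t.+1 -> #|A :\ j| = t.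
Proof. by move=> jA; rewrite (cardsD1 j A) jA add1n => -[]. Qed.

End SubsetSums.

Lemma exists_subset_card (T : finType) (U : {set T}) k :
  (k <= #|U|)%N -> exists2 K : {set T}, K \subset U & #|K| = k.
Proof.
rewrite -bin_gt0 -cards_draws => /card_gt0P[K]; rewrite inE => /andP[sKU /eqP].
by exists K.
Qed.

Section NullSums.
Variables (T : finType) (F : fieldType) (p : nat).
Hypothesis natr_neq0 : forall x, (0 < x < p)%N -> x%:R != 0 :> F.

Definition null_sums t k (U : {set T}) (y : {set T} -> F) :=
  forall K : {set T}, K \subset U -> #|K| = k -> subset_sum t y K = 0.

Implicit Types (U : {set T}) (y : {set T} -> F).

Lemma null_sums_drop t k U y a : a \in U -> (k - t)%:R != 0 :> F ->
  null_sums t.+1 k.+1 U y ->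
  null_sums t.+1 k (U :\ a) (fun B => y B + (k - t)%:R^-1 * drop_sum (fun C => y (a |: C)) B).
Proof.
move=> aU kt_neq0 null K sKU cardK.
have aK : a \notin K by apply/negP => /(subsetP sKU); rewrite !inE eqxx.
have := null (a |: K); rewrite cardsU1 aK cardK => /(_ _ erefl).
rewrite (subset_sumS _ _ (setU11 a K)) setU1K // => <-; last first.
  by rewrite subUset sub1set aU (subset_trans sKU) ?subsetDl.
rewrite /subset_sum big_split /= -mulr_sumr -!/(subset_sum _ _ _) subset_sum_drop_sum.
by rewrite cardK mulrA mulVf ?mul1r.
Qed.

(* Wilson's induction on [#|U|]: for [a \in U], both [B |-> y (a |: B)] and the
   function of [null_sums_drop] are null systems on [U :\ a]. *)
Lemma null_sums_eq0 v t k (U : {set T}) (y : {set T} -> F) :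
  #|U| = v -> (t <= k)%N -> (t + k <= v)%N -> ((t < k)%N -> (k < p)%N) ->
  null_sums t k U y -> forall A : {set T}, A \subset U -> #|A| = t -> y A = 0.
Proof.
elim: v t k U y => [|v IH] t k U y cardU le_tk le_tkv ltp null A sAU cardA.
all: have [le_kt|lt_tk] := leqP k t; first by
  rewrite -(subset_sum_id y cardA) null // cardA; apply/eqP; rewrite eqn_leq le_tk.
  lia.
have lt_kp := ltp lt_tk.
case: t le_tk le_tkv ltp null cardA lt_tk => [|t] le_tk le_tkv ltp null cardA lt_tk.
  have [K sKU cardK] := exists_subset_card (k := k) (U := U) ltac:(lia).
  by move/eqP: cardA; rewrite cards_eq0 => /eqP->; rewrite -(subset_sum0 y K) null.
case: k le_tk le_tkv ltp null lt_tk lt_kp => // k le_tk le_tkv ltp null lt_tk lt_kp.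
have [a aU] : exists a, a \in U by apply/card_gt0P; rewrite cardU.
set U' := U :\ a; have cardU' : #|U'| = v := cardsD1S aU cardU.
have kt_neq0 : (k - t)%:R != 0 :> F by apply: natr_neq0; lia.
pose z B := y (a |: B); pose c : F := (k - t)%:R^-1; pose w B := y B + c * drop_sum z B.
have w0 : forall B : {set T}, B \subset U' -> #|B| = t.+1 -> w B = 0.
  apply: (IH t.+1 k U' w cardU') => [||_|]; [lia | lia | lia | exact: null_sums_drop].
have z0 : forall B : {set T}, B \subset U' -> #|B| = t -> z B = 0.
  apply: (IH t k.+1 U' z cardU') => [||//|K sKU' cardK]; try lia.
  have := null K (subset_trans sKU' (subsetDl _ _)) cardK.
  rewrite /subset_sum (eq_bigr (fun B => - (c * drop_sum z B))); last first.
    move=> B /andP[sBK /eqP cardB]; apply/eqP; rewrite -addr_eq0.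
    exact/eqP/w0/cardB/(subset_trans sBK).
  rewrite sumrN -mulr_sumr -/(subset_sum _ (drop_sum z) _) subset_sum_drop_sum.
  have kt1_neq0 : (k.+1 - t)%:R != 0 :> F by apply: natr_neq0; lia.
  rewrite cardK => /eqP; rewrite oppr_eq0 !mulf_eq0 invr_eq0.
  by rewrite (negbTE kt_neq0) (negbTE kt1_neq0) => /eqP.
case aA: (a \in A).
  by rewrite -(setD1K aA); apply: z0 (cardsD1S aA cardA); rewrite /U' setSD.
have sAU' : A \subset U' by rewrite /U' subsetD1 sAU aA.
rewrite -(w0 A sAU' cardA) /w /drop_sum big1 ?mulr0 ?addr0 // => j jA.
exact: z0 (subset_trans (subsetDl _ _) sAU') (cardsD1S jA cardA).
Qed.

End NullSums.

Definition ffact_poly (R : nzRingType) (q : nat) : {poly R} := \prod_(j < q) ('X - j%:R%:P).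

Lemma size_ffact_poly (R : nzRingType) q : size (ffact_poly R q) = q.+1.
Proof. by rewrite size_prod_XsubC /index_enum unlock -enumT -cardT card_ord. Qed.

Lemma horner_ffact_poly (R : comNzRingType) q x :
  (ffact_poly R q).[x%:R] = (x ^_ q)%:R.
Proof.
rewrite ffact_prod horner_prod natr_prod.
have [le_qx|lt_xq] := leqP q x.
  by apply: eq_bigr => j _; rewrite hornerXsubC natrB // ltnW // (leq_trans _ le_qx).
rewrite [LHS](bigD1 (Ordinal lt_xq)) // [RHS](bigD1 (Ordinal lt_xq)) //=.
by rewrite hornerXsubC subrr subnn !mul0r.
Qed.

Definition evalv (F : fieldType) m (S : pred 'I_m) (x : 'I_m -> F) (P : {poly F})
  : 'rV[F]_m := \sum_(a | S a) P.[x a] *: delta_mx 0 a.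

Lemma evalv_is_linear (F : fieldType) m S x : linear (@evalv F m S x).
Proof.
move=> c P Q; rewrite /evalv scaler_sumr -big_split; apply: eq_bigr => a _.
by rewrite hornerD hornerZ scalerDl scalerA.
Qed.

HB.instance Definition _ (F : fieldType) m (S : pred (ordinal m)) x :=
  GRing.isLinear.Build F {poly F} 'rV[F]_m _ (@evalv F m S x) (@evalv_is_linear F m S x).

Section EvalVectors.
Variables (F : fieldType) (m : nat) (S : pred 'I_m) (x : 'I_m -> F).
Local Notation evalv := (evalv S x).

Lemma evalv_modp h P : (forall a, S a -> root h (x a)) -> evalv P = evalv (P %% h).
Proof.
move=> hx; rewrite {1}(divp_eq P h) linearD /= addrC -[RHS]addr0; congr (_ + _).
by rewrite /evalv big1 // => a /hx /rootP hxa; rewrite hornerM hxa mulr0 scale0r.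
Qed.

Lemma evalv_span (V : {vspace 'rV[F]_m}) d :
  (forall q, (q < d)%N -> evalv (ffact_poly F q) \in V) ->
  forall P : {poly F}, (size P <= d)%N -> evalv P \in V.
Proof.
elim: d => [|d IH] ffactV P szP.
  by move: szP; rewrite leqn0 size_poly_eq0 => /eqP->; rewrite linear0 mem0v.
have ffact_neq0 : ffact_poly F d != 0 by rewrite -size_poly_eq0 size_ffact_poly.
rewrite (divp_eq P (ffact_poly F d)) (size1_polyC (p := P %/ _)); last first.
  by rewrite size_divp // size_ffact_poly leq_subLR addn1.
rewrite mul_polyC linearD linearZ /= memvD ?memvZ ?ffactV //.
apply: IH => [q lt_qd|]; first by rewrite ffactV // ltnS ltnW.
by rewrite -ltnS -(size_ffact_poly F d) ltn_modpN0.
Qed.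

End EvalVectors.

Lemma card_supsets (T : finType) (I B : {set T}) q : I \subset B ->
  #|[set J : {set T} | (I \subset J) && (J \subset B) && (#|J| == #|I| + q)%N]| =
  'C(#|B| - #|I|, q).
Proof.
move=> sIB; rewrite -cardsDS // -cards_draws.
rewrite -[RHS](card_in_imset (f := fun C => I :|: C)); last first.
  move=> C1 C2; rewrite !inE !subsetD => /andP[/andP[_ dC1] _] /andP[/andP[_ dC2] _].
  move/(congr1 (fun S => S :\: I)).
  by rewrite !setDUl setDv !set0U (setDidPl dC1) (setDidPl dC2).
apply: eq_card => J; rewrite inE; apply/idP/imsetP => [|[C]].
  case/andP=> /andP[sIJ sJB] /eqP cardJ; exists (J :\: I).
    by rewrite inE setSD //= cardsD (setIidPr sIJ) cardJ; apply/eqP; lia.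
  by rewrite -{1}(setIidPr sIJ) setID.
rewrite inE subsetD => /andP[/andP[sCB dCI] /eqP cardC] ->.
rewrite subsetUl subUset sIB sCB cardsU.
by move: dCI; rewrite -setI_eq0 setIC => /eqP->; rewrite cards0 subn0 cardC eqxx.
Qed.

Lemma card_Xset n : #|Xset n| = n.-1.
Proof.
have -> : Xset n = [set widen_ord (leq_pred n) i | i : 'I_n.-1].
  apply/setP => x; rewrite !inE; apply/idP/imsetP => [lt_xn|[i _ ->] /=]; last exact: ltn_ord.
  by exists (Ordinal lt_xn) => //; apply: val_inj.
by rewrite card_imset ?card_ord // => i j /(congr1 val) /= /val_inj.
Qed.

Lemma in_layer n (I : {set 'I_n}) k :
  (I \in layers n k k.+1) = (I \subset Xset n) && (#|I| == k).
Proof. by rewrite inE ltnS -eqn_leq eq_sym. Qed.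

Lemma card_layer n k : #|layers n k k.+1| = 'C(n.-1, k).
Proof. by rewrite -card_Xset -cards_draws; apply: eq_card => I; rewrite in_layer inE. Qed.

Lemma card_setIX n (B : {set 'I_n}) :
  #|B| = #|B :&: Xset n| \/ #|B| = #|B :&: Xset n|.+1.
Proof.
rewrite -(cardsID (Xset n) B).
have : (#|B :\: Xset n| <= 1)%N.
  apply/card_le1_eqP => x y; rewrite !inE -!leqNgt => /andP[xX _] /andP[yX _].
  by apply: val_inj; move: (ltn_ord x) (ltn_ord y) xX yX => /=; lia.
by case: #|B :\: Xset n| => [|[|]] // _; rewrite ?addn0 ?addn1; [left|right].
Qed.

Lemma natr_Fp_neq0 p : prime p -> forall x, (0 < x < p)%N -> x%:R != 0 :> 'F_p.
Proof. by move=> pp x /andP[x0 xp]; rewrite -val_eqE /= val_Fp_nat // modn_small // -lt0n. Qed.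

Lemma fact_Fp_neq0 p x : prime p -> (x < p)%N -> x`!%:R != 0 :> 'F_p.
Proof.
move=> pp lt_xp; rewrite fact_prod natr_prod prodf_seq_neq0; apply/allP => j.
by rewrite mem_index_iota => lt_jx; apply: natr_Fp_neq0 => //; lia.
Qed.

Section Forms.
Variables (p n m : nat) (A : 'I_m -> {set 'I_n}).

Lemma Lform_in_Lspan lo hi H : H \in layers n lo hi -> Lform p A H \in Lspan p A lo hi.
Proof. by move=> HH; apply: memv_span; apply/mapP; exists H; rewrite ?mem_enum. Qed.

Lemma Lspan_monotone lo hi hi' : (hi <= hi')%N -> (Lspan p A lo hi <= Lspan p A lo hi')%VS.
Proof.
move=> le_hi; apply/span_subvP => x /mapP[H].
rewrite mem_enum inE => /andP[sHX /andP[le_lo lt_hi]] ->.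
by apply: Lform_in_Lspan; rewrite inE sHX le_lo (leq_trans lt_hi).
Qed.

Definition Lsup (T : {set 'I_n}) k : 'rV['F_p]_m :=
  \sum_(J in layers n k k.+1 | T \subset J) Lform p A J.

Lemma Lsup_coef (T : {set 'I_n}) q : T \subset Xset n ->
  Lsup T (#|T| + q) =
  \sum_(a | T \subset A a) 'C(#|A a :&: Xset n| - #|T|, q)%:R *: delta_mx 0 a.
Proof.
move=> sTX; rewrite /Lsup /Lform (exchange_big_dep xpredT) //= [RHS]big_mkcond /=.
apply: eq_bigr => a _; rewrite sumr_const -scaler_nat.
case: ifPn => [sTA|nsTA].
  rewrite -card_supsets ?subsetI ?sTA //; congr (_%:R *: _); apply: eq_card => J.
  rewrite inE -topredE /= in_layer subsetI.
  by case: (T \subset J); case: (J \subset A a); rewrite ?andbF ?andbT.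
rewrite eq_card0 ?scale0r // => J; apply/negbTE; apply: contra nsTA.
by case/andP=> /andP[_ sTJ] /(subset_trans sTJ).
Qed.

Lemma Lsup_in_Lspan (K : {set 'I_p}) lo (T : {set 'I_n}) :
  prime p -> (forall a, [exists k in K, val k == (#|A a| %% p)%N]) ->
  (lo <= #|T|)%N -> T \subset Xset n -> (2 * #|K| < p)%N ->
  Lsup T (#|T| + 2 * #|K|) \in Lspan p A lo (#|T| + 2 * #|K|).
Proof.
move=> pp hK le_lo sTX lt_r2p.
set t := #|T|; set r2 := (2 * #|K|)%N; set V := Lspan _ _ _ _.
pose S a := T \subset A a.
pose x a : 'F_p := (#|A a :&: Xset n| - t)%:R.
have evalv_ffact q : evalv S x (ffact_poly _ q) = q`!%:R *: Lsup T (t + q).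
  rewrite Lsup_coef // scaler_sumr; apply: eq_bigr => a _.
  by rewrite horner_ffact_poly -bin_ffact natrM mulrC scalerA.
have ffactV q : (q < r2)%N -> evalv S x (ffact_poly _ q) \in V.
  move=> lt_qr; rewrite evalv_ffact memvZ // /Lsup; apply: memv_suml => J.
  rewrite in_layer => /andP[/andP[sJX /eqP cardJ] _]; apply: Lform_in_Lspan.
  by rewrite inE sJX cardJ; apply/andP; split; lia.
(* [#|A a :&: Xset n|] is [#|A a|] or [#|A a| - 1], and [#|A a|] is a residue in [K]. *)
pose roots : seq 'F_p :=
  [seq (val k)%:R - t%:R | k <- enum K] ++ [seq (val k)%:R - 1 - t%:R | k <- enum K].
pose h := \prod_(z <- roots) ('X - z%:P).
have size_h : size h = r2.+1.
  by rewrite size_prod_XsubC size_cat !size_map -cardE /r2 mul2n addnn.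
have root_h a : S a -> root h (x a).
  move=> sTA; rewrite root_prod_XsubC /x natrB; last first.
    by rewrite subset_leq_card // subsetI sTX andbT.
  have /existsP[k /andP[kK /eqP val_k]] := hK a.
  have k_Aa : (val k)%:R = #|A a|%:R :> 'F_p by rewrite val_k Fp_nat_mod.
  rewrite mem_cat; case: (card_setIX (A a)) => cardAa; rewrite cardAa in k_Aa.
    by apply/orP; left; apply/mapP; exists k; rewrite ?mem_enum // k_Aa.
  by apply/orP; right; apply/mapP; exists k; rewrite ?mem_enum // k_Aa -addn1 natrD addrK.
have := evalv_span ffactV (P := ffact_poly _ r2 %% h).
rewrite -evalv_modp // evalv_ffact => /(_ _)/(memvZ (r2`!%:R)^-1).
rewrite scalerA mulVf ?scale1r ?fact_Fp_neq0 //; apply.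
by rewrite -ltnS -size_h ltn_modpN0 // -size_poly_eq0 size_h.
Qed.

End Forms.

Section DimLemmas.
Variables (K : fieldType) (aT rT sT : vectType K).

Lemma dimv_limg_leq (f : 'Hom(aT, rT)) (g : 'Hom(aT, sT)) :
  (lker f <= lker g)%VS -> (\dim (limg g) <= \dim (limg f))%N.
Proof.
move=> /dimvS; have := limg_ker_dim f fullv; have := limg_ker_dim g fullv.
rewrite !capfv; lia.
Qed.

Lemma dimv_add_limg (f : 'Hom(aT, rT)) (V : {vspace rT}) (D R : {vspace aT}) :
  (R <= D)%VS -> (f @: R <= V)%VS ->
  (\dim (V + f @: D) + \dim R <= \dim V + \dim D)%N.
Proof.
move=> sRD fRV.
have sfD : (V + f @: D <= V + f @: (D :\: R))%VS.
  rewrite -{1}(addv_diff_cap D R) (capv_idPr sRD) limgD addvA subv_add subvv.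
  by rewrite (subv_trans fRV) ?addvSl.
have := dimvS sfD; have := (dimv_add_leqif V (f @: (D :\: R))).1.
have := limg_ker_dim f (D :\: R); have := dimv_cap_compl D R.
rewrite (capv_idPr sRD); lia.
Qed.

End DimLemmas.

Definition sfun (p n : nat) := {ffun {set 'I_n} -> ('F_p)^o}.

Definition indicator p n (J : {set 'I_n}) : sfun p n := [ffun J' => (J' == J)%:R].

Definition layer_indicators p n k : seq (sfun p n) :=
  [seq indicator p J | J <- enum (layers n k k.+1)].

Definition layer_comb p n m (A : 'I_m -> {set 'I_n}) k (g : sfun p n) : 'rV['F_p]_m :=
  \sum_(J in layers n k k.+1) g J *: Lform p A J.

Definition layer_sums p n t k (y : sfun p n) : sfun p n :=
  [ffun J => if J \in layers n k k.+1 then subset_sum t y J else 0].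

Definition restrict p n (S : {set {set 'I_n}}) (y : sfun p n) : 'rV['F_p]_#|S| :=
  \row_i y (enum_val i).

Lemma layer_comb_is_linear p n m A k : linear (@layer_comb p n m A k).
Proof.
move=> c g1 g2; rewrite /layer_comb scaler_sumr -big_split; apply: eq_bigr => J _.
by rewrite !ffunE scalerDl scalerA.
Qed.

Lemma layer_sums_is_linear p n t k : linear (@layer_sums p n t k).
Proof.
move=> c y1 y2; apply/ffunP => J; rewrite !ffunE; case: ifP => _; last by rewrite addr0 scaler0.
by rewrite /subset_sum scaler_sumr -big_split; apply: eq_bigr => T _; rewrite !ffunE.
Qed.

Lemma restrict_is_linear p n S : linear (@restrict p n S).
Proof. by move=> c y1 y2; apply/rowP => i; rewrite !mxE !ffunE. Qed.

HB.instance Definition _ p n m A k :=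
  GRing.isLinear.Build 'F_p (sfun p n) 'rV['F_p]_m _ (@layer_comb p n m A k)
    (@layer_comb_is_linear p n m A k).
HB.instance Definition _ p n t k :=
  GRing.isLinear.Build 'F_p (sfun p n) (sfun p n) _ (@layer_sums p n t k)
    (@layer_sums_is_linear p n t k).
HB.instance Definition _ p n S :=
  GRing.isLinear.Build 'F_p (sfun p n) _ _ (@restrict p n S) (@restrict_is_linear p n S).

Section Step.
Variables (p n m : nat) (A : 'I_m -> {set 'I_n}).

Lemma layer_comb_layer_sums t k (y : sfun p n) :
  layer_comb A k (layer_sums t k y) = \sum_(T in layers n t t.+1) y T *: Lsup p A T k.
Proof.
rewrite /layer_comb (eq_bigr (fun J : {set 'I_n} =>
  \sum_(T in layers n t t.+1 | T \subset J) y T *: Lform p A J)) => [|J]; last first.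
  rewrite ffunE in_layer => /[dup] /andP[sJX _] -> /=; rewrite scaler_suml.
  apply: eq_bigl => T; rewrite in_layer.
  by case sTJ: (T \subset J); rewrite ?andbF ?andbT ?(subset_trans sTJ sJX).
rewrite (exchange_big_dep (mem (layers n t t.+1))) /=; last by move=> J T _ /andP[].
by apply: eq_bigr => T TL; rewrite /Lsup scaler_sumr; apply: eq_bigl => J; rewrite TL.
Qed.

Lemma dim_limg_restrict (S : {set {set 'I_n}}) :
  \dim (limg (linfun (@restrict p n S))) = #|S|.
Proof.
suff -> : limg (linfun (@restrict p n S)) = fullv by rewrite dimvf dim_matrix mul1r.
apply/eqP; rewrite eqEsubv subvf; apply/subvP => u _.
rewrite (row_sum_delta u); apply: memv_suml => i _.
apply: memvZ; rewrite [delta_mx _ _](_ : _ = restrict S (indicator p (enum_val i))).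
  by rewrite -[restrict _ _]lfunE /= memv_img ?memvf.
by apply/rowP => j; rewrite !mxE ffunE (inj_eq enum_val_inj) eq_sym.
Qed.

Lemma card_layer_leq_dim_layer_sums t k : prime p -> (t <= k)%N -> (t + k <= n.-1)%N ->
  ((t < k)%N -> (k < p)%N) ->
  (#|layers n t t.+1| <= \dim (limg (linfun (@layer_sums p n t k))))%N.
Proof.
move=> pp le_tk le_tkn ltp; rewrite -dim_limg_restrict; apply: dimv_limg_leq.
apply/subvP => y; rewrite !memv_ker !lfunE /= => /eqP sums0.
apply/eqP/rowP => i; rewrite !mxE; have := enum_valP i; rewrite in_layer => /andP[sTX /eqP].
apply: (null_sums_eq0 (natr_Fp_neq0 pp) (card_Xset n) le_tk le_tkn ltp _ sTX).
move=> K sKX cardK; have := congr1 (fun g : sfun p n => g K) sums0.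
by rewrite /= !ffunE in_layer sKX cardK eqxx.
Qed.

Lemma Lspan_layerS lo k :
  (Lspan p A lo k.+1 <= Lspan p A lo k +
     linfun (layer_comb A k) @: <<layer_indicators p n k>>)%VS.
Proof.
apply/span_subvP => x /mapP[H]; rewrite mem_enum inE => /andP[sHX /andP[le_lo lt_Hk]] ->.
have [lt_k|le_k] := ltnP #|H| k.
  by apply: (subvP (addvSl _ _)); apply: Lform_in_Lspan; rewrite inE sHX le_lo lt_k.
have HL : H \in layers n k k.+1 by rewrite in_layer sHX eqn_leq -ltnS lt_Hk le_k.
apply: (subvP (addvSr _ _)); rewrite limg_span -map_comp /layer_indicators; apply/memv_span/mapP.
exists H; rewrite ?mem_enum // /= lfunE /= /layer_comb (bigD1 H) //= big1 => [|J /andP[_ nJH]].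
  by rewrite ffunE eqxx scale1r addr0.
by rewrite ffunE (negbTE nJH) scale0r.
Qed.

Lemma sfun_sum_indicator (S : {set {set 'I_n}}) (g : sfun p n) :
  (forall J, J \notin S -> g J = 0) -> g = \sum_(J in S) g J *: indicator p J.
Proof.
move=> g0; apply/ffunP => J; rewrite sum_ffunE.
have [JS|nJS] := boolP (J \in S); last first.
  rewrite g0 // big1 // => J' J'S; rewrite !ffunE.
  by case: eqP => [eJ|_]; [rewrite eJ J'S in nJS | rewrite scaler0].
rewrite (bigD1 J) //= big1 => [|J' /andP[_ nJ'J]]; rewrite !ffunE ?eqxx ?addr0.
  exact/esym/mulr1.
by rewrite eq_sym (negbTE nJ'J) scaler0.
Qed.

Lemma limg_layer_sums_sub t k :
  (limg (linfun (@layer_sums p n t k)) <= <<layer_indicators p n k>>)%VS.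
Proof.
apply/subvP => _ /memv_imgP[y _ ->]; rewrite lfunE /=.
rewrite (@sfun_sum_indicator (layers n k k.+1) (layer_sums t k y)) => [|J /negbTE nJL].
  by apply: memv_suml => J JL; apply/memvZ/memv_span/mapP; exists J; rewrite ?mem_enum.
by rewrite ffunE nJL.
Qed.

Lemma dim_Lspan_step (K : {set 'I_p}) lo t : prime p ->
  (forall a, [exists k in K, val k == (#|A a| %% p)%N]) -> (lo <= t)%N ->
  ((t < t + 2 * #|K|)%N -> (t + 2 * #|K| < p)%N) -> (t + (t + 2 * #|K|) <= n.-1)%N ->
  (\dim (Lspan p A lo (t + 2 * #|K|).+1) + 'C(n.-1, t)
    <= \dim (Lspan p A lo (t + 2 * #|K|)) + 'C(n.-1, t + 2 * #|K|))%N.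
Proof.
move=> pp hK le_lo ltp le_n; set k := (t + 2 * #|K|)%N.
set f := linfun (@layer_comb p n m A k); set R := limg (linfun (@layer_sums p n t k)).
set D := <<layer_indicators p n k>>%VS.
have fRV : (f @: R <= Lspan p A lo k)%VS.
  apply/subvP => _ /memv_imgP[_ /memv_imgP[y _ ->] ->]; rewrite !lfunE /= layer_comb_layer_sums.
  apply: memv_suml => T; rewrite in_layer => /andP[sTX /eqP cardT]; apply: memvZ.
  rewrite /k -cardT; apply: Lsup_in_Lspan; rewrite ?cardT //.
  by move: ltp (prime_gt0 pp); rewrite /k; case: #|K|; lia.
have dimD : (\dim D <= 'C(n.-1, k))%N.
  by rewrite -card_layer (leq_trans (dim_span _)) ?size_map -?cardE.
have := card_layer_leq_dim_layer_sums pp (leq_addr _ _) le_n ltp; rewrite card_layer => dimR.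
apply: leq_trans (leq_add (dimvS (Lspan_layerS lo k)) dimR) _.
by apply: leq_trans (dimv_add_limg (limg_layer_sums_sub t k) fRV) _; rewrite leq_add2l.
Qed.

End Step.

Local Close Scope ring_scope.

Lemma big_nat_shift1 (c : nat -> nat) N w :
  \sum_(N.+1 <= j < N.+1 + w) c j + c N = \sum_(N <= j < N + w) c j + c (N + w).
Proof.
rewrite addSn -big_nat_recr ?leq_addr // addnC -big_ltn //.
by rewrite ltnS leq_addr.
Qed.

Lemma window_telescope (a c : nat -> nat) w i N : i <= N ->
  (forall t, i <= t < N -> a (t + w).+1 + c t <= a (t + w) + c (t + w)) ->
  a (N + w) + \sum_(i <= j < i + w) c j <= a (i + w) + \sum_(N <= j < N + w) c j.
Proof.
elim: N => [|N IH]; first by rewrite leqn0 => /eqP->.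
rewrite leq_eqVlt => /orP[/eqP-> //| le_iN] step.
have := IH le_iN (fun t ht => step t ltac:(lia)).
have := step N ltac:(lia); have := big_nat_shift1 c N w.
rewrite addSn; lia.
Qed.

Theorem mainTheorem6 (p n m : nat) (K L : {set 'I_p}) (A : 'I_m -> {set 'I_n})
  (i : nat) :
  prime p ->
  [disjoint K & L] ->
  injective A ->
  (forall a : 'I_m, [exists k in K, val k == #|A a| %% p]) ->
  (forall a b : 'I_m, a != b -> [exists l in L, val l == #|A a :&: A b| %% p]) ->
  (2 * #|L| + 1 <= n + 2 * #|K|) ->
  (i + 2 * #|K| <= #|L| + 1) ->
  \sum_(i <= j < i + 2 * #|K|) 'C(n.-1, j)
    + quot_dim (Lspan p A i #|L|.+1) (Lspan p A i (i + 2 * #|K|))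
  <= \sum_(#|L|.+1 - 2 * #|K| <= j < #|L|.+1) 'C(n.-1, j).
Proof.
move=> pp disjKL _ hK _ le_n le_i.
have ltLp : 0 < #|K| -> #|L| < p.
  have := max_card (K :|: L).
  by rewrite card_ord cardsU (disjoint_setI0 disjKL) cards0 subn0; lia.
have := @window_telescope (fun k => \dim (Lspan p A i k)) (fun j => 'C(n.-1, j))
  (2 * #|K|) i (#|L|.+1 - 2 * #|K|) ltac:(lia)
  (fun t ht => dim_Lspan_step (lo := i) (t := t) pp hK ltac:(lia) ltac:(lia) ltac:(lia)).
have := dimvS (Lspan_monotone p A i (hi := i + 2 * #|K|) (hi' := #|L|.+1) ltac:(lia)).
have -> : #|L|.+1 - 2 * #|K| + 2 * #|K| = #|L|.+1 by lia.
rewrite /quot_dim; lia.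
Qed.
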